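(* For every $\xi\in\mathbb R^3\setminus\{0\}$, all eigenvalues of the matrix $$A(\xi)=\begin{pmatrix}0&|\xi|&0&0\\-|\xi|&\nu|\xi|^2&-|\xi|&-\frac{1}{3\mathcal C}|\xi|\\0&\frac23|\xi|&\frac23\kappa|\xi|^2+\frac{2\gamma}{3}&-\frac23 b_0\\0&0&-\mathcal C\gamma&a|\xi|^2+\mathcal Cb_0\end{pmatrix}$$ have strictly positive real part. Equivalently, writing $\varrho=|\xi|$ and $\det(A-\lambda I)=\lambda^4-a_1\lambda^3+a_2\lambda^2-a_3\lambda+a_4$, one has $a_1>0$, $A_2:=a_1a_2-a_3>0$ and $A_3:=a_3(a_1a_2-a_3)-a_1^2a_4>0$ for all $\varrho>0$, where $$a_1=(a+\tfrac23\kappa+\nu)\varrho^2+\tfrac{2\gamma}{3}+\mathcal Cb_0,$$ $$a_2=\Big[(\nu a+\tfrac23\nu\kappa+\tfrac23a\kappa)\varrho^2+\tfrac{2\gamma\nu}{3}+\mathcal Cb_0\nu+\tfrac{2\gamma a}{3}+\tfrac{2\kappa\mathcal Cb_0}{3}+\tfrac53\Big]\varrho^2,$$ $$a_3=\Big[\tfrac23a\kappa\nu\varrho^4+\big(\tfrac{2(\gamma a+\kappa\mathcal Cb_0)\nu}{3}+\tfrac{5a}{3}+\tfrac{2\kappa}{3}\big)\varrho^2+\tfrac53\mathcal Cb_0+\tfrac{8\gamma}{9}\Big]\varrho^2,$$ $$a_4=\tfrac23\big(a\kappa\varrho^2+a\gamma+\kappa\mathcal Cb_0\big)\varrho^4.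$$
   Context: Constants: $\mathcal C,\mathcal L,\sigma_a,\sigma_s>0$, $\mu>0$, $\lambda=\zeta-\frac23\mu$ with $\zeta\ge0$, $\kappa>0$, $b'(1)>0$ (derivative at $1$ of a given smooth function $b$). Set $\nu=\lambda+2\mu$, $\gamma=\mathcal L\sigma_a b'(1)$, $a=\frac{\mathcal C}{3\mathcal L(\sigma_a+\sigma_s)}$, $b_0=\mathcal L\sigma_a$. The matrix $A(\xi)$ is the Fourier symbol of the linearized (compressible part of the) diffusion approximation radiation hydrodynamics system in the variables $(\hat\rho,\hat d,\hat\theta,\hat j_0)$ with $d=\Lambda^{-1}\mathrm{div}\,u$, $\Lambda=(-\Delta)^{1/2}$. *)

From HB Require Import structures.
From mathcomp Require Import all_boot all_order all_algebra.
From mathcomp.real_closed Require Import complex.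
Set Implicit Arguments. Unset Strict Implicit. Unset Printing Implicit Defensive.
Import Order.TTheory GRing.Theory Num.Theory.
Local Open Scope ring_scope.

Record rhd_params (R : rcfType) := RhdParams {
  pC : R; pL : R; psa : R; pss : R; pmu : R; pzeta : R; pkappa : R;
  pdb1 : R (* the value b'(1) *) }.

Section Consts.
Variable R : rcfType.
Variable P : rhd_params R.
Local Notation C := (pC P). Local Notation L := (pL P).
Local Notation sa := (psa P). Local Notation ss := (pss P).
Local Notation mu := (pmu P). Local Notation zeta := (pzeta P).
Local Notation kappa := (pkappa P). Local Notation db1 := (pdb1 P).

Definition lam_c : R := zeta - (2%:R / 3%:R) * mu.
Definition nu_c : R := lam_c + 2%:R * mu.
Definition gamma_c : R := L * sa * db1.
Definition a_c : R := C / (3%:R * L * (sa + ss)).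
Definition b0_c : R := L * sa.

(* Entries of A(xi) as functions of rho = |xi| (0-based indices). *)
Definition Aentry (rho : R) (i j : nat) : R :=
  match i, j with
  | 0, 1 => rho
  | 1, 0 => - rho
  | 1, 1 => nu_c * rho ^+ 2
  | 1, 2 => - rho
  | 1, 3 => - (1 / (3%:R * C)) * rho
  | 2, 1 => (2%:R / 3%:R) * rho
  | 2, 2 => (2%:R / 3%:R) * kappa * rho ^+ 2 + 2%:R * gamma_c / 3%:R
  | 2, 3 => - (2%:R / 3%:R) * b0_c
  | 3, 2 => - C * gamma_c
  | 3, 3 => a_c * rho ^+ 2 + C * b0_c
  | _, _ => 0
  end.

Definition Arho (rho : R) : 'M[R]_4 := \matrix_(i < 4, j < 4) Aentry rho i j.

Definition xnorm (xi : 'rV[R]_3) : R := Num.sqrt (\sum_(i < 3) xi 0 i ^+ 2).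

Definition Axi (xi : 'rV[R]_3) : 'M[R[i]]_4 := map_mx (fun x => (x%:C)%C) (Arho (xnorm xi)).

Definition coef_a1 (rho : R) : R :=
  (a_c + (2%:R/3%:R) * kappa + nu_c) * rho ^+ 2 + 2%:R * gamma_c / 3%:R + C * b0_c.
Definition coef_a2 (rho : R) : R :=
  ((nu_c * a_c + (2%:R/3%:R) * nu_c * kappa + (2%:R/3%:R) * a_c * kappa) * rho ^+ 2
   + 2%:R * gamma_c * nu_c / 3%:R + C * b0_c * nu_c + 2%:R * gamma_c * a_c / 3%:R
   + 2%:R * kappa * C * b0_c / 3%:R + 5%:R / 3%:R) * rho ^+ 2.
Definition coef_a3 (rho : R) : R :=
  ((2%:R/3%:R) * a_c * kappa * nu_c * rho ^+ 4
   + (2%:R * (gamma_c * a_c + kappa * C * b0_c) * nu_c / 3%:R + 5%:R * a_c / 3%:R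
      + 2%:R * kappa / 3%:R) * rho ^+ 2
   + (5%:R/3%:R) * C * b0_c + (8%:R/9%:R) * gamma_c) * rho ^+ 2.
Definition coef_a4 (rho : R) : R :=
  (2%:R/3%:R) * (a_c * kappa * rho ^+ 2 + a_c * gamma_c + kappa * C * b0_c) * rho ^+ 4.

Definition coef_A2 (rho : R) : R := coef_a1 rho * coef_a2 rho - coef_a3 rho.
Definition coef_A3 (rho : R) : R :=
  coef_a3 rho * (coef_a1 rho * coef_a2 rho - coef_a3 rho) - coef_a1 rho ^+ 2 * coef_a4 rho.
End Consts.

From HB Require Import structures.
From mathcomp Require Import all_boot all_order all_algebra.
From mathcomp.real_closed Require Import complex.
From mathcomp Require Import ring lra.
Set Implicit Arguments.
Unset Strict Implicit.
Unset Printing Implicit Defensive.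

Import Order.TTheory GRing.Theory Num.Theory.
Local Open Scope ring_scope.

(* For every z,
   |p(-z)|^2 - |p(z)|^2 = 4 Re z * G(z), and G > 0 as soon as a1, a4 and the Hurwitz
   determinants A2 = a1 a2 - a3 and A3 = a3 A2 - a1^2 a4 are positive; so every root of p
   has Re z >= 0, and Re z = 0 is excluded by hand.  After the substitution S = rho^2 / 3,
   A2 and A3 are polynomials with positive coefficients in positive quantities. *)

Lemma horner_char_poly (R : comNzRingType) n (A : 'M[R]_n) (x : R) :
  (char_poly A).[x] = \det (x%:M - A).
Proof.
rewrite /char_poly -horner_evalE -det_map_mx; congr (\det _); apply/matrixP => i j.
by rewrite !mxE rmorphB rmorphMn /= !horner_evalE hornerX hornerC.
Qed.

Lemma det_mx4 (R : comNzRingType) (f : nat -> nat -> R) :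
  \det (\matrix_(i < 4, j < 4) f i j) =
    f 0 0 * (f 1 1 * (f 2 2 * f 3 3 - f 2 3 * f 3 2) - f 1 2 * (f 2 1 * f 3 3 - f 2 3 * f 3 1)
             + f 1 3 * (f 2 1 * f 3 2 - f 2 2 * f 3 1))
  - f 0 1 * (f 1 0 * (f 2 2 * f 3 3 - f 2 3 * f 3 2) - f 1 2 * (f 2 0 * f 3 3 - f 2 3 * f 3 0)
             + f 1 3 * (f 2 0 * f 3 2 - f 2 2 * f 3 0))
  + f 0 2 * (f 1 0 * (f 2 1 * f 3 3 - f 2 3 * f 3 1) - f 1 1 * (f 2 0 * f 3 3 - f 2 3 * f 3 0)
             + f 1 3 * (f 2 0 * f 3 1 - f 2 1 * f 3 0))
  - f 0 3 * (f 1 0 * (f 2 1 * f 3 2 - f 2 2 * f 3 1) - f 1 1 * (f 2 0 * f 3 2 - f 2 2 * f 3 0)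
             + f 1 2 * (f 2 0 * f 3 1 - f 2 1 * f 3 0)).
Proof.
do 3 rewrite !(expand_det_row _ 0) !big_ord_recl !big_ord0 /cofactor.
by rewrite !det_mx11 !mxE /= /bump /= -!plusE /=; ring.
Qed.

Lemma poly_horner_inj (R : numDomainType) (p q : {poly R}) :
  (forall x, p.[x] = q.[x]) -> p = q.
Proof.
move=> eq_pq; apply/eqP; rewrite -subr_eq0; apply/negPn/negP => nz_pq.
pose s : seq R := [seq i%:R | i <- iota 0 (size (p - q))].
have roots_s : all (root (p - q)) s.
  by apply/allP => x /mapP [i _ ->]; rewrite /root hornerD hornerN eq_pq subrr.
have uniq_s : uniq s.
  by rewrite map_inj_uniq ?iota_uniq // => i j /eqP; rewrite eqr_nat => /eqP.
by have := max_poly_roots nz_pq roots_s uniq_s; rewrite size_map size_iota ltnn.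
Qed.

Section HurwitzQuartic.
Variable R : realFieldType.

Definition quartic_Re (a1 a2 a3 a4 x y : R) : R :=
  x ^+ 4 - 6 * x ^+ 2 * y ^+ 2 + y ^+ 4 - a1 * (x ^+ 3 - 3 * x * y ^+ 2)
  + a2 * (x ^+ 2 - y ^+ 2) - a3 * x + a4.
Definition quartic_Im (a1 a2 a3 x y : R) : R :=
  4 * x ^+ 3 * y - 4 * x * y ^+ 3 - a1 * (3 * x ^+ 2 * y - y ^+ 3)
  + a2 * (2 * x * y) - a3 * y.

Definition quartic_gap (a1 a2 a3 a4 u N : R) : R :=
  a3 * a4 + 2 * a1 * a4 * u + (a1 * a2 - a3) * N ^+ 2
  + N * (a2 * a3 - a1 * a4 + 2 * a3 * u + a1 * N ^+ 2).

(* |p(-z)|^2 - |p(z)|^2 = 4 Re z * gap, with u = Re (z^2) and N = |z|^2. *)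
Lemma quartic_reflection (a1 a2 a3 a4 x y : R) :
  quartic_Re (- a1) a2 (- a3) a4 x y ^+ 2 + quartic_Im (- a1) a2 (- a3) x y ^+ 2
  - (quartic_Re a1 a2 a3 a4 x y ^+ 2 + quartic_Im a1 a2 a3 x y ^+ 2)
  = 4 * x * quartic_gap a1 a2 a3 a4 (x ^+ 2 - y ^+ 2) (x ^+ 2 + y ^+ 2).
Proof. by rewrite /quartic_Re /quartic_Im /quartic_gap; ring. Qed.

Variables a1 a2 a3 a4 : R.
Hypotheses (a1_gt0 : 0 < a1) (a4_gt0 : 0 < a4)
  (A2_gt0 : 0 < a1 * a2 - a3) (A3_gt0 : 0 < a3 * (a1 * a2 - a3) - a1 ^+ 2 * a4).

Lemma quartic_gap_gt0 (u N : R) : u ^+ 2 <= N ^+ 2 -> 0 <= N ->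
  0 < quartic_gap a1 a2 a3 a4 u N.
Proof.
move=> uN N_ge0; have := A3_gt0; have := A2_gt0; set c := a1 * a2 - a3 => c_gt0 A3c_gt0.
have N2u2_ge0 : 0 <= N ^+ 2 - u ^+ 2 by rewrite subr_ge0.
have even_gt0 : 0 < a3 * a4 + 2 * a1 * a4 * u + c * N ^+ 2.
  rewrite -(pmulr_rgt0 _ c_gt0).
  have -> : c * (a3 * a4 + 2 * a1 * a4 * u + c * N ^+ 2) = (c * u + a1 * a4) ^+ 2
      + a4 * (a3 * c - a1 ^+ 2 * a4) + c ^+ 2 * (N ^+ 2 - u ^+ 2) by rewrite /c; ring.
  have := sqr_ge0 (c * u + a1 * a4); have := mulr_gt0 a4_gt0 A3c_gt0.
  have := mulr_ge0 (sqr_ge0 c) N2u2_ge0; lra.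
have odd_ge0 : 0 <= N * (a2 * a3 - a1 * a4 + 2 * a3 * u + a1 * N ^+ 2).
  rewrite mulr_ge0 // -(pmulr_rge0 _ a1_gt0).
  have -> : a1 * (a2 * a3 - a1 * a4 + 2 * a3 * u + a1 * N ^+ 2) = (a1 * u + a3) ^+ 2
      + (a3 * c - a1 ^+ 2 * a4) + a1 ^+ 2 * (N ^+ 2 - u ^+ 2) by rewrite /c; ring.
  have := sqr_ge0 (a1 * u + a3); have := mulr_ge0 (sqr_ge0 a1) N2u2_ge0; lra.
by rewrite /quartic_gap -/c; lra.
Qed.

Lemma hurwitz_quartic_root (x y : R) :
  quartic_Re a1 a2 a3 a4 x y = 0 -> quartic_Im a1 a2 a3 x y = 0 -> 0 < x.
Proof.
move=> Re0 Im0.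
have gap_gt0 : 0 < quartic_gap a1 a2 a3 a4 (x ^+ 2 - y ^+ 2) (x ^+ 2 + y ^+ 2).
  apply: quartic_gap_gt0; last by rewrite addr_ge0 ?sqr_ge0.
  have := mulr_ge0 (sqr_ge0 x) (sqr_ge0 y); nra.
have x_ge0 : 0 <= x.
  have := quartic_reflection a1 a2 a3 a4 x y; rewrite Re0 Im0 expr0n addr0 subr0 => eq4x.
  have : 0 <= 4 * x * quartic_gap a1 a2 a3 a4 (x ^+ 2 - y ^+ 2) (x ^+ 2 + y ^+ 2).
    by rewrite -eq4x addr_ge0 ?sqr_ge0.
  by rewrite pmulr_lge0 // pmulr_rge0 // ltr0n.
rewrite lt_def x_ge0 andbT; apply/eqP => x0.
move: Re0 Im0; rewrite x0 /quartic_Re /quartic_Im => Re0 Im0.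
have [y0 | y_neq0] := eqVneq y 0.
  by move: a4_gt0; rewrite (_ : a4 = 0) ?ltxx // -Re0 y0; ring.
have a3E : a3 = a1 * y ^+ 2.
  apply/eqP; rewrite eq_sym -subr_eq0; apply/eqP; apply: (mulfI y_neq0).
  by rewrite mulr0 -Im0; ring.
move: A3_gt0; rewrite (_ : _ - _ = 0) ?ltxx //.
by rewrite -[RHS](mulr0 (- a1 ^+ 2)) -Re0 a3E; ring.
Qed.

End HurwitzQuartic.

Lemma hurwitz_quartic_Re_gt0 (R : rcfType) (a1 a2 a3 a4 : R) (z : R[i]) :
  0 < a1 -> 0 < a4 -> 0 < a1 * a2 - a3 -> 0 < a3 * (a1 * a2 - a3) - a1 ^+ 2 * a4 ->
  root (map_poly (real_complex R)
          ('X^4 - a1%:P * 'X^3 + a2%:P * 'X^2 - a3%:P * 'X + a4%:P)) z ->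
  0 < complex.Re z.
Proof.
move=> a1_gt0 a4_gt0 A2_gt0 A3_gt0.
rewrite /root !(rmorphB, rmorphD, rmorphM) /= ?map_polyXn !map_polyX !map_polyC /=.
rewrite !(hornerD, hornerN, hornerM, hornerCM, hornerC, hornerX, hornerXn).
case: z => x y /eqP root_xy.
apply: (hurwitz_quartic_root a1_gt0 a4_gt0 A2_gt0 A3_gt0 (y := y)).
  by apply: etrans (congr1 (@complex.Re R) root_xy); rewrite /quartic_Re /=; ring.
by apply: etrans (congr1 (@complex.Im R) root_xy); rewrite /quartic_Im /=; ring.
Qed.

Ltac positivity := repeat match goal with
  | |- is_true (0 < _%:R) => apply: ltr0Sn
  | |- is_true (0 < 1) => apply: ltr01
  | |- is_true (0 < _ + _) => apply: addr_gt0
  | |- is_true (0 < _ * _) => apply: mulr_gt0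
  | |- is_true (0 < _^-1) => rewrite invr_gt0
  | |- is_true (0 < _ ^+ _) => apply: exprn_gt0
  | |- _ => assumption
  end.

(* The coefficients a1, ..., a4 in the variables S = rho^2 / 3, a, K = 2 kappa / 3, n = nu,
   G = 2 gamma / 3 and m = C b0, in which they have integer coefficients. *)
Definition rhd_a1 (R : numDomainType) (S a K n G m : R) : R :=
  3 * (a + K + n) * S + G + m.
Definition rhd_a2 (R : numDomainType) (S a K n G m : R) : R :=
  9 * (n * a + n * K + a * K) * S ^+ 2 + 3 * (G * n + m * n + G * a + K * m) * S + 5 * S.
Definition rhd_a3 (R : numDomainType) (S a K n G m : R) : R :=
  27 * a * K * n * S ^+ 3 + 9 * (G * a + K * m) * n * S ^+ 2 + 15 * a * S ^+ 2
  + 9 * K * S ^+ 2 + 5 * m * S + 4 * G * S.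
Definition rhd_a4 (R : numDomainType) (S a K n G m : R) : R :=
  9 * (3 * a * K * S + a * G + K * m) * S ^+ 2.

Section ScaledHurwitz.
Variables (R : numDomainType) (S a K n G m : R).
Hypotheses (S_gt0 : 0 < S) (a_gt0 : 0 < a) (K_gt0 : 0 < K) (n_gt0 : 0 < n)
  (G_gt0 : 0 < G) (m_gt0 : 0 < m).
Local Notation a1 := (rhd_a1 S a K n G m).
Local Notation a2 := (rhd_a2 S a K n G m).
Local Notation a3 := (rhd_a3 S a K n G m).
Local Notation a4 := (rhd_a4 S a K n G m).

Lemma rhd_a1_gt0 : 0 < a1.
Proof. by rewrite /rhd_a1; positivity. Qed.

Lemma rhd_a4_gt0 : 0 < a4.
Proof. by rewrite /rhd_a4; positivity. Qed.

Lemma rhd_A2_gt0 : 0 < a1 * a2 - a3.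
Proof.
have -> : a1 * a2 - a3 =
    S * G + 3 * S * n * m ^+ 2 + 6 * S * n * G * m + 3 * S * n * G ^+ 2
    + 3 * S * K * m ^+ 2 + 3 * S * K * G * m + 3 * S * a * G * m + 3 * S * a * G ^+ 2
    + 15 * S ^+ 2 * n + 9 * S ^+ 2 * n ^+ 2 * m + 9 * S ^+ 2 * n ^+ 2 * G + 6 * S ^+ 2 * K
    + 18 * S ^+ 2 * K * n * m + 18 * S ^+ 2 * K * n * G + 9 * S ^+ 2 * K ^+ 2 * m
    + 18 * S ^+ 2 * a * n * m + 18 * S ^+ 2 * a * n * G + 18 * S ^+ 2 * a * K * m
    + 18 * S ^+ 2 * a * K * G + 9 * S ^+ 2 * a ^+ 2 * G + 27 * S ^+ 3 * K * n ^+ 2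
    + 27 * S ^+ 3 * K ^+ 2 * n + 27 * S ^+ 3 * a * n ^+ 2 + 54 * S ^+ 3 * a * K * n
    + 27 * S ^+ 3 * a * K ^+ 2 + 27 * S ^+ 3 * a ^+ 2 * n + 27 * S ^+ 3 * a ^+ 2 * K.
  by rewrite /rhd_a1 /rhd_a2 /rhd_a3; ring.
by positivity.
Qed.

Lemma rhd_A3_gt0 : 0 < a3 * (a1 * a2 - a3) - a1 ^+ 2 * a4.
Proof.
have -> : a3 * (a1 * a2 - a3) - a1 ^+ 2 * a4 =
    5 * S ^+ 2 * G * m + 4 * S ^+ 2 * G ^+ 2 + 15 * S ^+ 2 * n * m ^+ 3
    + 42 * S ^+ 2 * n * G * m ^+ 2 + 39 * S ^+ 2 * n * G ^+ 2 * m
    + 12 * S ^+ 2 * n * G ^+ 3 + 6 * S ^+ 2 * K * m ^+ 3 + 9 * S ^+ 2 * K * G * m ^+ 2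
    + 3 * S ^+ 2 * K * G ^+ 2 * m + 6 * S ^+ 2 * a * G * m ^+ 2
    + 9 * S ^+ 2 * a * G ^+ 2 * m + 3 * S ^+ 2 * a * G ^+ 3 + 75 * S ^+ 3 * n * m
    + 60 * S ^+ 3 * n * G + 45 * S ^+ 3 * n ^+ 2 * m ^+ 2 + 81 * S ^+ 3 * n ^+ 2 * G * m
    + 36 * S ^+ 3 * n ^+ 2 * G ^+ 2 + 30 * S ^+ 3 * K * m + 33 * S ^+ 3 * K * G
    + 63 * S ^+ 3 * K * n * m ^+ 2 + 171 * S ^+ 3 * K * n * G * m
    + 99 * S ^+ 3 * K * n * G ^+ 2 + 27 * S ^+ 3 * K * n ^+ 2 * m ^+ 3
    + 54 * S ^+ 3 * K * n ^+ 2 * G * m ^+ 2 + 27 * S ^+ 3 * K * n ^+ 2 * G ^+ 2 * m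
    + 18 * S ^+ 3 * K ^+ 2 * m ^+ 2 + 9 * S ^+ 3 * K ^+ 2 * G * m
    + 27 * S ^+ 3 * K ^+ 2 * n * m ^+ 3 + 27 * S ^+ 3 * K ^+ 2 * n * G * m ^+ 2
    + 15 * S ^+ 3 * a * G + 135 * S ^+ 3 * a * n * m ^+ 2 + 198 * S ^+ 3 * a * n * G * m
    + 72 * S ^+ 3 * a * n * G ^+ 2 + 27 * S ^+ 3 * a * n ^+ 2 * G * m ^+ 2
    + 54 * S ^+ 3 * a * n ^+ 2 * G ^+ 2 * m + 27 * S ^+ 3 * a * n ^+ 2 * G ^+ 3
    + 54 * S ^+ 3 * a * K * m ^+ 2 + 72 * S ^+ 3 * a * K * G * m
    + 18 * S ^+ 3 * a * K * G ^+ 2 + 54 * S ^+ 3 * a * K * n * G * m ^+ 2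
    + 54 * S ^+ 3 * a * K * n * G ^+ 2 * m + 36 * S ^+ 3 * a ^+ 2 * G * m
    + 27 * S ^+ 3 * a ^+ 2 * G ^+ 2 + 27 * S ^+ 3 * a ^+ 2 * n * G ^+ 2 * m
    + 27 * S ^+ 3 * a ^+ 2 * n * G ^+ 3 + 135 * S ^+ 4 * K * n
    + 270 * S ^+ 4 * K * n ^+ 2 * m + 189 * S ^+ 4 * K * n ^+ 2 * G
    + 81 * S ^+ 4 * K * n ^+ 3 * m ^+ 2 + 81 * S ^+ 4 * K * n ^+ 3 * G * m
    + 54 * S ^+ 4 * K ^+ 2 + 189 * S ^+ 4 * K ^+ 2 * n * m + 270 * S ^+ 4 * K ^+ 2 * n * G
    + 162 * S ^+ 4 * K ^+ 2 * n ^+ 2 * m ^+ 2 + 162 * S ^+ 4 * K ^+ 2 * n ^+ 2 * G * m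
    + 81 * S ^+ 4 * K ^+ 3 * n * m ^+ 2 + 225 * S ^+ 4 * a * n
    + 270 * S ^+ 4 * a * n ^+ 2 * m + 297 * S ^+ 4 * a * n ^+ 2 * G
    + 81 * S ^+ 4 * a * n ^+ 3 * G * m + 81 * S ^+ 4 * a * n ^+ 3 * G ^+ 2
    + 90 * S ^+ 4 * a * K + 378 * S ^+ 4 * a * K * n * m + 405 * S ^+ 4 * a * K * n * G
    + 243 * S ^+ 4 * a * K * n ^+ 2 * m ^+ 2 + 486 * S ^+ 4 * a * K * n ^+ 2 * G * m
    + 243 * S ^+ 4 * a * K * n ^+ 2 * G ^+ 2 + 108 * S ^+ 4 * a * K ^+ 2 * m
    + 27 * S ^+ 4 * a * K ^+ 2 * G + 243 * S ^+ 4 * a * K ^+ 2 * n * m ^+ 2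
    + 324 * S ^+ 4 * a * K ^+ 2 * n * G * m + 405 * S ^+ 4 * a ^+ 2 * n * m
    + 216 * S ^+ 4 * a ^+ 2 * n * G + 162 * S ^+ 4 * a ^+ 2 * n ^+ 2 * G * m
    + 162 * S ^+ 4 * a ^+ 2 * n ^+ 2 * G ^+ 2 + 162 * S ^+ 4 * a ^+ 2 * K * m
    + 135 * S ^+ 4 * a ^+ 2 * K * G + 324 * S ^+ 4 * a ^+ 2 * K * n * G * m
    + 243 * S ^+ 4 * a ^+ 2 * K * n * G ^+ 2 + 54 * S ^+ 4 * a ^+ 3 * G
    + 81 * S ^+ 4 * a ^+ 3 * n * G ^+ 2 + 243 * S ^+ 5 * K ^+ 2 * n ^+ 2
    + 243 * S ^+ 5 * K ^+ 2 * n ^+ 3 * m + 243 * S ^+ 5 * K ^+ 3 * n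
    + 243 * S ^+ 5 * K ^+ 3 * n ^+ 2 * m + 810 * S ^+ 5 * a * K * n ^+ 2
    + 486 * S ^+ 5 * a * K * n ^+ 3 * m + 486 * S ^+ 5 * a * K * n ^+ 3 * G
    + 567 * S ^+ 5 * a * K ^+ 2 * n + 972 * S ^+ 5 * a * K ^+ 2 * n ^+ 2 * m
    + 729 * S ^+ 5 * a * K ^+ 2 * n ^+ 2 * G + 486 * S ^+ 5 * a * K ^+ 3 * n * m
    + 405 * S ^+ 5 * a ^+ 2 * n ^+ 2 + 243 * S ^+ 5 * a ^+ 2 * n ^+ 3 * G
    + 567 * S ^+ 5 * a ^+ 2 * K * n + 729 * S ^+ 5 * a ^+ 2 * K * n ^+ 2 * m
    + 972 * S ^+ 5 * a ^+ 2 * K * n ^+ 2 * G + 162 * S ^+ 5 * a ^+ 2 * K ^+ 2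
    + 729 * S ^+ 5 * a ^+ 2 * K ^+ 2 * n * m + 729 * S ^+ 5 * a ^+ 2 * K ^+ 2 * n * G
    + 405 * S ^+ 5 * a ^+ 3 * n + 243 * S ^+ 5 * a ^+ 3 * n ^+ 2 * G
    + 162 * S ^+ 5 * a ^+ 3 * K + 486 * S ^+ 5 * a ^+ 3 * K * n * G
    + 729 * S ^+ 6 * a * K ^+ 2 * n ^+ 3 + 729 * S ^+ 6 * a * K ^+ 3 * n ^+ 2
    + 729 * S ^+ 6 * a ^+ 2 * K * n ^+ 3 + 1458 * S ^+ 6 * a ^+ 2 * K ^+ 2 * n ^+ 2
    + 729 * S ^+ 6 * a ^+ 2 * K ^+ 3 * n + 729 * S ^+ 6 * a ^+ 3 * K * n ^+ 2
    + 729 * S ^+ 6 * a ^+ 3 * K ^+ 2 * n.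
  by rewrite /rhd_a1 /rhd_a2 /rhd_a3 /rhd_a4; ring.
by positivity.
Qed.

End ScaledHurwitz.

Lemma xnorm_gt0 (R : rcfType) (xi : 'rV[R]_3) : xi != 0 -> 0 < xnorm xi.
Proof.
move=> xi_neq0; rewrite /xnorm sqrtr_gt0.
have [i xi_i_neq0] : exists i, xi 0 i != 0.
  apply/existsP; apply: contraR xi_neq0; rewrite negb_exists => /forallP xi0.
  by apply/eqP/rowP => j; rewrite mxE; apply/eqP/negPn.
rewrite (bigD1 i) //= ltr_wpDr ?sumr_ge0 // => [j _|]; first exact: sqr_ge0.
by rewrite lt_def sqr_ge0 sqrf_eq0 xi_i_neq0.
Qed.

Section RadiationHydrodynamics.
Variables (R : rcfType) (P : rhd_params R).
Hypotheses (C_gt0 : 0 < pC P) (L_gt0 : 0 < pL P) (sa_gt0 : 0 < psa P)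
  (ss_gt0 : 0 < pss P) (mu_gt0 : 0 < pmu P) (zeta_ge0 : 0 <= pzeta P)
  (kappa_gt0 : 0 < pkappa P) (db1_gt0 : 0 < pdb1 P).

Lemma a_c_gt0 : 0 < a_c P.
Proof. by rewrite /a_c; positivity. Qed.

Lemma gamma_c_gt0 : 0 < gamma_c P.
Proof. by rewrite /gamma_c; positivity. Qed.

Lemma b0_c_gt0 : 0 < b0_c P.
Proof. by rewrite /b0_c; positivity. Qed.

Lemma nu_c_gt0 : 0 < nu_c P.
Proof.
have -> : nu_c P = pzeta P + 4 / 3 * pmu P by rewrite /nu_c /lam_c; field.
by apply: ltr_wpDl zeta_ge0 _; positivity.
Qed.

Let S (rho : R) : R := rho ^+ 2 / 3.
Let K : R := 2 / 3 * pkappa P.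
Let G : R := 2 / 3 * gamma_c P.
Let m : R := pC P * b0_c P.

Lemma coef_scaled (rho : R) :
  [/\ coef_a1 P rho = rhd_a1 (S rho) (a_c P) K (nu_c P) G m,
      coef_a2 P rho = rhd_a2 (S rho) (a_c P) K (nu_c P) G m,
      coef_a3 P rho = rhd_a3 (S rho) (a_c P) K (nu_c P) G m &
      coef_a4 P rho = rhd_a4 (S rho) (a_c P) K (nu_c P) G m].
Proof.
rewrite /coef_a1 /coef_a2 /coef_a3 /coef_a4 /rhd_a1 /rhd_a2 /rhd_a3 /rhd_a4 /S /K /G /m.
by split; field.
Qed.

Lemma coef_hurwitz_gt0 (rho : R) : 0 < rho ->
  [/\ 0 < coef_a1 P rho, 0 < coef_A2 P rho, 0 < coef_A3 P rho & 0 < coef_a4 P rho].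
Proof.
move=> rho_gt0; rewrite /coef_A2 /coef_A3; have [-> -> -> ->] := coef_scaled rho.
have S_gt0 : 0 < S rho by rewrite /S; positivity.
have K_gt0 : 0 < K by rewrite /K; positivity.
have G_gt0 : 0 < G by rewrite /G; apply: mulr_gt0 gamma_c_gt0; positivity.
have m_gt0 : 0 < m by rewrite /m mulr_gt0 ?b0_c_gt0.
have a_gt0 := a_c_gt0; have n_gt0 := nu_c_gt0.
by split; [apply: rhd_a1_gt0 | apply: rhd_A2_gt0 | apply: rhd_A3_gt0 | apply: rhd_a4_gt0].
Qed.

Lemma char_poly_Arho (rho : R) :
  char_poly (Arho P rho)
    = 'X^4 - (coef_a1 P rho)%:P * 'X^3 + (coef_a2 P rho)%:P * 'X^2
      - (coef_a3 P rho)%:P * 'X + (coef_a4 P rho)%:P.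
Proof.
apply: poly_horner_inj => x; rewrite horner_char_poly.
pose entry (i j : nat) := (if i == j then x else 0) - Aentry P rho i j.
have -> : x%:M - Arho P rho = \matrix_(i < 4, j < 4) entry i j.
  by apply/matrixP => i j; rewrite !mxE /entry val_eqE; case: (i == j).
rewrite det_mx4 /entry /Aentry /=.
rewrite !(hornerD, hornerN, hornerCM, hornerC, hornerX, hornerXn).
rewrite /coef_a1 /coef_a2 /coef_a3 /coef_a4.
by field; rewrite gt_eqF.
Qed.

Lemma eigenvalue_Axi_Re_gt0 (xi : 'rV[R]_3) (z : R[i]) :
  xi != 0 -> eigenvalue (Axi P xi) z -> 0 < 'Re z.
Proof.
move=> /xnorm_gt0 /coef_hurwitz_gt0 [a1_gt0 A2_gt0 A3_gt0 a4_gt0].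
rewrite eigenvalue_root_char /Axi -map_char_poly char_poly_Arho.
move=> /(hurwitz_quartic_Re_gt0 a1_gt0 a4_gt0 A2_gt0 A3_gt0).
by rewrite -complexRe (_ : 0 = (0 : R)%:C)%C // ltcR.
Qed.

End RadiationHydrodynamics.

Theorem mainTheorem5 (R : rcfType) (P : rhd_params R) :
  0 < pC P -> 0 < pL P -> 0 < psa P -> 0 < pss P -> 0 < pmu P -> 0 <= pzeta P ->
  0 < pkappa P -> 0 < pdb1 P ->
  (forall xi : 'rV[R]_3, xi != 0 ->
     forall z : R[i], eigenvalue (Axi P xi) z -> 0 < 'Re z)
  /\
  (forall rho : R, 0 < rho ->
     char_poly (Arho P rho)
       = 'X^4 - (coef_a1 P rho)%:P * 'X^3 + (coef_a2 P rho)%:P * 'X^2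
         - (coef_a3 P rho)%:P * 'X + (coef_a4 P rho)%:P
     /\ 0 < coef_a1 P rho /\ 0 < coef_A2 P rho /\ 0 < coef_A3 P rho).
Proof.
move=> C_gt0 L_gt0 sa_gt0 ss_gt0 mu_gt0 zeta_ge0 kappa_gt0 db1_gt0; split.
  by move=> xi xi_neq0 z; apply: eigenvalue_Axi_Re_gt0.
move=> rho rho_gt0; have [a1_gt0 A2_gt0 A3_gt0 _] := coef_hurwitz_gt0 C_gt0 L_gt0
  sa_gt0 ss_gt0 mu_gt0 zeta_ge0 kappa_gt0 db1_gt0 rho_gt0.
by split; first exact: char_poly_Arho.
Qed.
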